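(* Let $B_1,B_2$ be two commuting nilpotent operators on a finite-dimensional complex vector space $V$. Then there exist a nilpotent operator $B_2'$ on $V$ and a vector $w\in V$ such that (i) $B_2'$ commutes with $B_1$; (ii) every linear combination $\alpha B_2+\beta B_2'$ ($\alpha,\beta\in\mathbb C$) is nilpotent; (iii) $w$ is a cyclic vector for the pair $(B_1,B_2')$, i.e. no proper subspace of $V$ invariant under $B_1$ and $B_2'$ contains $w$. *)

From mathcomp Require Import all_boot all_order all_algebra.
Set Implicit Arguments. Unset Strict Implicit. Unset Printing Implicit Defensive.
Import GRing.Theory.
Local Open Scope ring_scope.

(* Operators on V = 'rV[C]_n are n x n matrices acting on row vectors on the
   right (v |-> v *m A); subspaces of V are row spaces of matrices (mxalgebra). *)

Definition nilpotent_mx (C : nzRingType) (n : nat) (A : 'M[C]_n) : Prop :=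
  exists k : nat, A ^+ k = 0.

Definition cyclic_pair (C : fieldType) (n : nat) (A B : 'M[C]_n) (w : 'rV[C]_n)
  : Prop :=
  forall U : 'M[C]_n,
    (w <= U)%MS -> (U *m A <= U)%MS -> (U *m B <= U)%MS -> (1%:M <= U)%MS.

From mathcomp Require Import all_boot all_order all_algebra.
Set Implicit Arguments. Unset Strict Implicit. Unset Printing Implicit Defensive.
Import GRing.Theory.
Local Open Scope ring_scope.

(* Write W for the image of B1 and work in V / W.  By induction on the rank of
   a B2-stable subspace S containing W, build an operator F0 that has a cyclic
   vector w on S modulo W, preserves every ker B1^k + W, and makes every
   a B2 + b F0 nilpotent modulo W: choose k0 maximal with S not inside
   ker B1^k0 + W; Nakayama (B2 is nilpotent) gives a vector g of S outside
   T = W + S B2 + (S /\ (ker B1^k0 + W)); take a hyperplane S1 of S containing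
   T but not g, and send g to the cyclic vector of S1.  Since F0 respects the
   kernels of the powers of B1 modulo W, it lifts to an operator X commuting
   with B1 with X = F0 modulo W (descending induction along the images B1^j V).
   Then (a B2 + b X)^N maps V into W and commutes with B1, so its m-th power
   vanishes when B1^m = 0; and a subspace stable under B1 and X that contains w
   fills V modulo W, hence is V by Nakayama. *)

Section RowSpaces.
Variables (F : fieldType) (n : nat).
Implicit Types (M S T U V X Y : 'M[F]_n) (g w : 'rV[F]_n).

Lemma mxexpr0 M : M ^+ 0 = 1%:M.
Proof. by []. Qed.

Lemma mxexprS M j : M ^+ j.+1 = M *m M ^+ j.
Proof. by rewrite exprS mulmxE. Qed.

Lemma mxexprSr M j : M ^+ j.+1 = M ^+ j *m M.
Proof. by rewrite exprSr mulmxE. Qed.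

Lemma commmxX M X k : M *m X = X *m M -> M ^+ k *m X = X *m M ^+ k.
Proof.
move=> cMX; have : GRing.comm X (M ^+ k).
  by apply: commrX; rewrite /GRing.comm -!mulmxE cMX.
by rewrite /GRing.comm -!mulmxE.
Qed.

Lemma submxB m1 m2 (A B : 'M[F]_(m1, n)) (C : 'M[F]_(m2, n)) :
  (A <= C)%MS -> (B <= C)%MS -> (A - B <= C)%MS.
Proof. by move=> sAC sBC; rewrite addmx_sub // eqmx_opp. Qed.

Lemma nakayama_submx m1 m2 (S : 'M[F]_(m1, n)) (A : 'M[F]_(m2, n)) M p :
  (S <= A + S *m M)%MS -> stablemx A M -> M ^+ p = 0 -> (S <= A)%MS.
Proof.
move=> sS sAM Mp0.
have sSj j : (S <= A + S *m M ^+ j)%MS.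
  elim: j => [|j IHj]; first by rewrite mxexpr0 mulmx1 addsmxSr.
  apply: (submx_trans sS); rewrite addsmx_sub addsmxSl /=.
  apply: submx_trans (submxMr M IHj) _; rewrite addsmxMr addsmx_sub.
  by rewrite (submx_trans sAM (addsmxSl _ _)) mxexprSr mulmxA addsmxSr.
by have := sSj p; rewrite Mp0 mulmx0 addsmx0.
Qed.

Lemma exists_mx_patch U V X Y : (U :&: V = 0)%MS ->
  exists Z : 'M[F]_n,
    (forall m (A : 'M[F]_(m, n)), (A <= U)%MS -> A *m Z = A *m X) /\
    (forall m (A : 'M[F]_(m, n)), (A <= V)%MS -> A *m Z = A *m Y).
Proof.
move=> dUV; have dVU : (V :&: U = 0)%MS by rewrite capmxC.
exists (proj_mx U V *m X + proj_mx V U *m Y); split=> m A sA.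
  rewrite mulmxDr (mulmxA A) (mulmxA A) proj_mx_id // proj_mx_0 //.
  by rewrite mul0mx addr0.
rewrite mulmxDr (mulmxA A) (mulmxA A) proj_mx_0 // proj_mx_id //.
by rewrite mul0mx add0r.
Qed.

Lemma mulmx_pinv_row g w : g != 0 -> g *m (pinvmx g *m w) = w.
Proof.
move=> nz_g; have free_g : row_free g by rewrite /row_free rank_rV nz_g.
rewrite mulmxA; suff -> : g *m pinvmx g = 1%:M by rewrite mul1mx.
by apply: (row_free_inj free_g); rewrite mulmxKpV // mul1mx.
Qed.

Lemma capmx_row_eq0 g U : ~~ (g <= U)%MS -> (<<g>> :&: U = 0)%MS.
Proof.
move=> ngU; apply/eqP; rewrite -mxrank_eq0.
have sgUg : ((<<g>> :&: U) <= g)%MS.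
  by rewrite (submx_trans (capmxSl _ _)) ?genmxE.
have [le_r eq_r] := mxrank_leqif_sup sgUg.
have : (\rank (<<g>> :&: U) < \rank g)%N.
  rewrite ltn_neqAle le_r andbT eq_r; apply: contra ngU => sg.
  exact: submx_trans sg (capmxSr _ _).
by move: (rank_leq_row g); case: (\rank g) => [|[|]] // _; rewrite ltnS leqn0.
Qed.

Lemma exists_hyperplane T S g :
  (T <= S)%MS -> (g <= S)%MS -> ~~ (g <= T)%MS ->
  exists S1 : 'M[F]_n,
    [/\ (T <= S1)%MS, (S1 <= S)%MS, ~~ (g <= S1)%MS & (S <= <<g>> + S1)%MS].
Proof.
move=> sTS sgS ngT; pose D := (S :\: (T + g))%MS.
exists (T + D)%MS; split; rewrite ?addsmxSl ?addsmx_sub ?sTS ?diffmxSl //.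
  apply: contra ngT => /sub_addsmxP[[u v] /= def_g].
  have : (v *m D <= D :&: (T + g))%MS.
    rewrite sub_capmx submxMl /=.
    have -> : v *m D = g - u *m T by rewrite def_g addrC addKr.
    by rewrite submxB ?addsmxSr // (submx_trans (submxMl _ _) (addsmxSl _ _)).
  by rewrite capmx_diff submx0 => /eqP vD0; rewrite def_g vD0 addr0 submxMl.
have /eqmxP/andP[_ sS] := addsmx_diff_cap_eq S (T + g)%MS.
apply: submx_trans sS _; rewrite addsmx_sub.
rewrite (submx_trans (addsmxSr _ _) (addsmxSr _ _)) /=.
have /capmx_idPr -> : (T + g <= S)%MS by rewrite addsmx_sub sTS sgS.
rewrite addsmx_sub (submx_trans (addsmxSl T D) (addsmxSr _ _)) /=.
by apply: submx_trans (addsmxSl _ _); rewrite genmxE.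
Qed.

Lemma mulmx_expr_agree S X Y :
  (forall m (A : 'M[F]_(m, n)), (A <= S)%MS -> A *m X = A *m Y) ->
  stablemx S Y ->
  forall j m (A : 'M[F]_(m, n)), (A <= S)%MS -> A *m X ^+ j = A *m Y ^+ j.
Proof.
move=> eqXY sSY; elim=> [|j IHj] m A sAS; first by [].
rewrite !mxexprS !mulmxA eqXY // IHj //.
exact: submx_trans (submxMr _ sAS) sSY.
Qed.

Lemma submx_exprB U X Y :
  stablemx U X -> (X - Y <= U)%MS -> forall j, (X ^+ j - Y ^+ j <= U)%MS.
Proof.
move=> sUX sXY; elim=> [|j IHj]; first by rewrite subrr sub0mx.
have -> : X ^+ j.+1 - Y ^+ j.+1 = (X ^+ j - Y ^+ j) *m X + Y ^+ j *m (X - Y).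
  by rewrite !mxexprSr mulmxBl mulmxBr addrA subrK.
rewrite addmx_sub //; last exact: mulmx_sub.
by case/submxP: IHj => D ->; rewrite -mulmxA mulmx_sub.
Qed.

Lemma commmx_expr_sub M X :
  M *m X = X *m M -> (X <= M)%MS -> forall k, (X ^+ k <= M ^+ k)%MS.
Proof.
move=> cMX sXM; elim=> [|k IHk]; first by [].
case/submxP: sXM => D def_X; case/submxP: IHk => E def_Xk.
rewrite mxexprS {1}def_X -mulmxA -(commmxX k (esym cMX)) def_Xk.
by rewrite -!mulmxA -mxexprSr !mulmxA submxMl.
Qed.

End RowSpaces.

Section CommutingLift.
Variables (F : fieldType) (n : nat) (B : 'M[F]_n).
Local Notation S j := (B ^+ j).
Local Notation K k := (kermx (B ^+ k)).

Definition preimage_mx j := locked (pinvmx (S j.+1) *m S j).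

Lemma image_exprS_sub j : (S j.+1 <= S j)%MS.
Proof. by rewrite mxexprS submxMl. Qed.

Lemma image_mulB_sub m (A : 'M[F]_(m, n)) j :
  (A <= S j)%MS -> (A *m B <= S j.+1)%MS.
Proof. by move/(submxMr B); rewrite -mxexprSr. Qed.

Lemma preimage_mxK m (A : 'M[F]_(m, n)) j :
  (A <= S j.+1)%MS -> A *m preimage_mx j *m B = A.
Proof.
move=> sA; rewrite /preimage_mx -lock -mulmxA -(mulmxA (pinvmx _)) -mxexprSr.
by rewrite mulmxA mulmxKpV.
Qed.

Lemma preimage_mx_sub m (A : 'M[F]_(m, n)) j : (A *m preimage_mx j <= S j)%MS.
Proof. by rewrite /preimage_mx -lock mulmxA submxMl. Qed.

Lemma mulB_ker_image_sub m (A : 'M[F]_(m, n)) j :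
  (A <= (S j :&: K 1) + S j.+1)%MS -> (A *m B <= S j.+2)%MS.
Proof.
move/(submxMr B)/submx_trans; apply.
rewrite addsmxMr addsmx_sub -mxexprSr submx_refl andbT.
have /sub_kermxP : ((S j :&: K 1) <= K 1)%MS by exact: capmxSr.
by rewrite expr1 => ->; rewrite sub0mx.
Qed.

(* [preimage_mx j] inverts B from S j.+1 back into S j, so
   [preimage_mx j *m F0 *m B] is F0 conjugated by B, acting on S j.+1; the
   lift on S j is patched together from a lift of this conjugate. *)
Definition lift_compatible j F0 :=
  [/\ stablemx (S j) F0, stablemx (S j.+1) F0 &
  forall k, ((S j :&: K k) *m F0 <= (S j :&: K k) + S j.+1)%MS].

Definition commuting_lift j F0 X :=
  [/\ stablemx (S j) X, S j *m (X *m B - B *m X) = 0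
    & (S j *m (X - F0) <= S j.+1)%MS].

Lemma lift_compatible_conj j F0 :
  lift_compatible j F0 -> lift_compatible j.+1 (preimage_mx j *m F0 *m B).
Proof.
case=> sF0 sF0S sF0K; split.
- rewrite !mulmxA; apply: image_mulB_sub.
  exact: submx_trans (submxMr F0 (preimage_mx_sub _ _)) sF0.
- set u := S j.+2; set v := u *m preimage_mx j.+1.
  have sv : (v <= S j.+1)%MS by exact: preimage_mx_sub.
  have vB : v *m B = u by rewrite /v preimage_mxK.
  have sKv : (u *m preimage_mx j - v <= S j :&: K 1)%MS.
    rewrite sub_capmx submxB ?preimage_mx_sub //=; last first.
      exact: submx_trans sv (image_exprS_sub _).
    apply/sub_kermxP; rewrite expr1 mulmxBl vB.
    by rewrite preimage_mxK ?image_exprS_sub ?subrr.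
  have -> : u *m (preimage_mx j *m F0 *m B) =
      v *m F0 *m B + (u *m preimage_mx j - v) *m F0 *m B.
    by rewrite -!mulmxDl addrC subrK !mulmxA.
  rewrite addmx_sub //.
    exact/image_mulB_sub/(submx_trans (submxMr F0 sv) sF0S).
  apply: mulB_ker_image_sub; exact: submx_trans (submxMr F0 sKv) (sF0K 1%N).
- move=> k; set u := (S j.+1 :&: K k)%MS.
  have su : (u *m preimage_mx j <= S j :&: K k.+1)%MS.
    rewrite sub_capmx preimage_mx_sub /=; apply/sub_kermxP.
    rewrite mxexprS mulmxA preimage_mxK ?capmxSl //.
    by apply/sub_kermxP; exact: capmxSr.
  rewrite !mulmxA.
  apply: submx_trans (submxMr B (submx_trans (submxMr F0 su) (sF0K k.+1))) _.
  rewrite addsmxMr -mxexprSr; apply: addsmxS => //.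
  rewrite sub_capmx image_mulB_sub ?capmxSl //=; apply/sub_kermxP.
  by rewrite -mulmxA -mxexprS; apply/sub_kermxP; exact: capmxSr.
Qed.

Section Step.
Variables (j : nat) (F0 X' : 'M[F]_n).
Hypothesis F0_compat : lift_compatible j F0.
Hypothesis X'_lift : commuting_lift j.+1 (preimage_mx j *m F0 *m B) X'.

Lemma commuting_lift_defect_sub m (A : 'M[F]_(m, n)) :
  (A <= S j)%MS -> (A *m (B *m X' - F0 *m B) <= S j.+2)%MS.
Proof.
case: F0_compat X'_lift => _ _ sF0K [_ _ sX'F0] sA.
have sAB : (A *m B <= S j.+1)%MS by exact: image_mulB_sub.
have sKA : (A *m B *m preimage_mx j - A <= S j :&: K 1)%MS.
  rewrite sub_capmx submxB ?preimage_mx_sub //=.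
  by apply/sub_kermxP; rewrite expr1 mulmxBl preimage_mxK ?subrr.
have -> : A *m (B *m X' - F0 *m B) = A *m B *m (X' - preimage_mx j *m F0 *m B)
    + (A *m B *m preimage_mx j - A) *m F0 *m B.
  by rewrite !mulmxBr !mulmxBl !mulmxA addrA subrK.
rewrite addmx_sub ?(submx_trans (submxMr _ sAB) sX'F0) //.
apply: mulB_ker_image_sub; exact: submx_trans (submxMr F0 sKA) (sF0K 1%N).
Qed.

Lemma commuting_lift_step : exists X, commuting_lift j F0 X.
Proof.
case: F0_compat X'_lift => sF0 sF0S _ [sX' cX' _].
pose W := (S j :\: S j.+1)%MS.
have dSW : (S j.+1 :&: W = 0)%MS by rewrite capmxC capmx_diff.
pose G := F0 + (B *m X' - F0 *m B) *m preimage_mx j.+1.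
have [X [XX' XG]] := exists_mx_patch X' G dSW.
pose A1 := S j *m proj_mx (S j.+1) W; pose A2 := S j *m proj_mx W (S j.+1).
have cover : (S j <= S j.+1 + W)%MS.
  have /eqmxP/andP[_ sS] := addsmx_diff_cap_eq (S j) (S j.+1).
  apply: submx_trans sS _; rewrite addsmxC addsmxS //.
  by have /capmx_idPr -> := image_exprS_sub j.
have defS : A1 + A2 = S j by rewrite add_proj_mx.
have sA1 : (A1 <= S j.+1)%MS by exact: proj_mx_sub.
have sA2 : (A2 <= W)%MS by exact: proj_mx_sub.
have sA2S : (A2 <= S j)%MS by apply: submx_trans sA2 (diffmxSl _ _).
have defSX : S j *m X = A1 *m X' + A2 *m G by rewrite -{1}defS mulmxDl XX' // XG.
have defA2B : A2 *m (B *m X' - F0 *m B) *m preimage_mx j.+1 *m B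
    = A2 *m (B *m X' - F0 *m B).
  by rewrite preimage_mxK // commuting_lift_defect_sub.
exists X; split.
- rewrite defSX /G mulmxDr !addmx_sub ?(submx_trans (submxMr _ sA2S) sF0) //.
    exact: submx_trans (submxMr _ sA1) (submx_trans sX' (image_exprS_sub _)).
  by rewrite mulmxA; apply: submx_trans (preimage_mx_sub _ _) (image_exprS_sub _).
- apply/eqP; rewrite mulmxBr subr_eq0; apply/eqP.
  rewrite mulmxA defSX mulmxA -mxexprSr XX' // mxexprSr -defS.
  rewrite !mulmxDl /G (mulmxDr A2 F0) (mulmxDl (A2 *m F0)).
  rewrite (mulmxA A2 _ (preimage_mx j.+1)) defA2B.
  have -> : A1 *m X' *m B = A1 *m B *m X'.
    case/submxP: sA1 => D ->; rewrite -!mulmxA; congr (D *m _).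
    by apply/eqP; rewrite -subr_eq0 -mulmxBr cX'.
  by congr (_ + _); rewrite mulmxBr !mulmxA addrC subrK.
- rewrite mulmxBr defSX -defS mulmxDl /G (mulmxDr A2 F0) opprD addrACA.
  rewrite (addrC (A2 *m F0)) addrK addmx_sub ?submxB ?mulmxA ?preimage_mx_sub //.
    exact: submx_trans (submxMr _ sA1) sX'.
  exact: submx_trans (submxMr _ sA1) sF0S.
Qed.

End Step.

Lemma commuting_lift_exists d j F0 :
  S (j + d) = 0 -> lift_compatible j F0 -> exists X, commuting_lift j F0 X.
Proof.
elim: d j F0 => [|d IHd] j F0 Sj0 compat.
  rewrite addn0 in Sj0; exists 0.
  by split; rewrite Sj0 !mul0mx ?sub0mx.
have Sjd0 : S (j.+1 + d) = 0 by rewrite addSnnS.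
have [X' X'_lift] := IHd j.+1 _ Sjd0 (lift_compatible_conj compat).
exact: commuting_lift_step compat X'_lift.
Qed.

Lemma exists_commuting_lift p F0 :
  B ^+ p = 0 -> (B *m F0 <= B)%MS ->
  (forall k, (K k *m F0 <= K k + B)%MS) ->
  exists X, B *m X = X *m B /\ (X - F0 <= B)%MS.
Proof.
move=> Bp0 sBF0 sKF0.
have compat : lift_compatible 0 F0.
  split; rewrite ?expr0 ?expr1 ?submx1 //.
  by move=> k; rewrite capmxC capmx1.
have [X [_]] := @commuting_lift_exists p 0 F0 Bp0 compat.
rewrite expr0 expr1 !mul1mx => /eqP; rewrite subr_eq0 => /eqP cX sXF0.
by exists X.
Qed.
End CommutingLift.

Section ResidueCyclic.
Variables (F : fieldType) (n : nat) (B1 B2 : 'M[F]_n) (m p : nat).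
Hypothesis B1m0 : B1 ^+ m = 0.
Hypothesis B2p0 : B2 ^+ p = 0.
Hypothesis cB12 : B1 *m B2 = B2 *m B1.
Local Notation K k := (kermx (B1 ^+ k)).
Local Notation H k := (kermx (B1 ^+ k) + B1)%MS.

Lemma ker_expr_stable k : stablemx (K k) B2.
Proof.
by apply/sub_kermxP; rewrite -mulmxA -(commmxX k cB12) mulmxA mulmx_ker mul0mx.
Qed.

Lemma ker_image_stable k : stablemx (H k) B2.
Proof. by rewrite addsmxMr addsmxS ?ker_expr_stable // cB12 submxMl. Qed.

Lemma ker_expr_mono k l : (k <= l)%N -> (K k <= K l)%MS.
Proof.
move=> le_kl; apply/sub_kermxP; rewrite -(subnKC le_kl) exprD -mulmxE mulmxA.
by rewrite mulmx_ker mul0mx.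
Qed.

Lemma ker_image0_sub : (H 0 <= B1)%MS.
Proof.
rewrite addsmx_sub submx_refl andbT.
by have := mulmx_ker (B1 ^+ 0); rewrite mxexpr0 mulmx1 => ->; exact: sub0mx.
Qed.

Lemma ker_image_full k : (m <= k)%N -> (1%:M <= H k)%MS.
Proof.
move=> le_mk; apply: submx_trans (addsmxSl _ _).
by apply/sub_kermxP; rewrite -(subnKC le_mk) exprD B1m0 mul0r mulmx0.
Qed.

(* All conditions are read modulo the image of B1. *)
Record residue_cyclic (S F0 : 'M[F]_n) (w : 'rV[F]_n) : Prop := ResidueCyclic {
  residue_vec_sub : (w <= S)%MS;
  residue_stable : stablemx S F0;
  residue_image_stable : stablemx B1 F0;
  residue_ker_stable : forall k, ((S :&: K k) *m F0 <= H k)%MS;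
  residue_cyclic_vec : forall U : 'M[F]_n,
    (w <= U)%MS -> (U *m F0 <= U + B1)%MS -> (S <= U + B1)%MS;
  residue_nilpotent : exists N, forall a b : F,
    (S *m (a *: B2 + b *: F0) ^+ N <= B1)%MS }.

Lemma residue_cyclic_image (S : 'M[F]_n) : (S <= B1)%MS -> residue_cyclic S 0 0.
Proof.
move=> sSB1; split=> [||| k | U _ _ |]; rewrite ?mulmx0 ?sub0mx //.
  exact: submx_trans sSB1 (addsmxSr _ _).
by exists 0%N => a b; rewrite mxexpr0 mulmx1.
Qed.

Lemma exists_max_ker_image (S : 'M[F]_n) : ~~ (S <= B1)%MS ->
  exists2 k0, ~~ (S <= H k0)%MS & forall k, ~~ (S <= H k)%MS -> (k <= k0)%N.
Proof.
move=> nSB1; have ex0 : exists k, ~~ (S <= H k)%MS.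
  by exists 0%N; apply: contra nSB1 => sS; apply: submx_trans sS ker_image0_sub.
have ub k : ~~ (S <= H k)%MS -> (k <= m)%N.
  apply: contraR; rewrite -ltnNge => /ltnW lt_mk.
  exact: submx_trans (submx1 _) (ker_image_full lt_mk).
by case: (ex_maxnP ex0 ub) => k0 nSH maxk0; exists k0.
Qed.

Lemma residue_peel_not_sub (S : 'M[F]_n) k :
  stablemx S B2 -> (B1 <= S)%MS -> ~~ (S <= H k)%MS ->
  ~~ (S <= B1 + S *m B2 + S :&: H k)%MS.
Proof.
move=> sSB2 sB1S; apply: contra => sST.
suff : (S <= S :&: H k)%MS by rewrite sub_capmx => /andP[].
apply: (nakayama_submx _ _ B2p0).
  apply: submx_trans sST _; rewrite !addsmx_sub addsmxSr addsmxSl !andbT.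
  by apply: submx_trans (addsmxSl _ _); rewrite sub_capmx sB1S addsmxSr.
rewrite sub_capmx (submx_trans (submxMr _ (capmxSl _ _)) sSB2).
exact: submx_trans (submxMr _ (capmxSr _ _)) (ker_image_stable _).
Qed.

Section Extension.
Variables (S S1 F0 F1 : 'M[F]_n) (g w1 : 'rV[F]_n).
Hypotheses (sB1S1 : (B1 <= S1)%MS) (sS1S : (S1 <= S)%MS).
Hypothesis sSB2 : (S *m B2 <= S1)%MS.
Hypothesis sSgS1 : (S <= <<g>> + S1)%MS.
Hypothesis eqF0F1 :
  forall r (A : 'M[F]_(r, n)), (A <= S1)%MS -> A *m F0 = A *m F1.
Hypothesis gF0 : g *m F0 = w1.
Hypothesis F1_cyclic : residue_cyclic S1 F1 w1.

Lemma extension_sub : (S *m F0 <= S1)%MS.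
Proof.
apply: submx_trans (submxMr _ sSgS1) _; rewrite addsmxMr addsmx_sub.
rewrite (eqmxMr _ (genmxE g)) gF0 (residue_vec_sub F1_cyclic) /=.
by rewrite eqF0F1 // (residue_stable F1_cyclic).
Qed.

Lemma extension_cyclic (U : 'M[F]_n) :
  (g <= U)%MS -> (U *m F0 <= U + B1)%MS -> (S <= U + B1)%MS.
Proof.
move=> sgU sUF0; pose U1 := ((U + B1) :&: S1)%MS.
have sU1S1 : (U1 <= S1)%MS := capmxSr _ _.
have sU1 : (U1 *m F1 <= U1 + B1)%MS.
  rewrite -eqF0F1 //; apply: submx_trans (addsmxSl _ _); rewrite sub_capmx.
  apply/andP; split.
    apply: submx_trans (submxMr _ (capmxSl _ _)) _.
    rewrite addsmxMr addsmx_sub sUF0 eqF0F1 //=.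
    exact: submx_trans (residue_image_stable F1_cyclic) (addsmxSr _ _).
  rewrite eqF0F1 //; exact: submx_trans (submxMr _ sU1S1) (residue_stable F1_cyclic).
have sw1U1 : (w1 <= U1)%MS.
  rewrite sub_capmx (residue_vec_sub F1_cyclic) andbT -gF0.
  exact: submx_trans (submxMr _ sgU) sUF0.
have sS1 := residue_cyclic_vec F1_cyclic sw1U1 sU1.
apply: submx_trans sSgS1 _; rewrite addsmx_sub genmxE (submx_trans sgU (addsmxSl _ _)).
by apply: submx_trans sS1 _; rewrite addsmx_sub capmxSl addsmxSr.
Qed.

Lemma extension_nilpotent : exists N, forall a b : F,
  (S *m (a *: B2 + b *: F0) ^+ N <= B1)%MS.
Proof.
have [N nilF1] := residue_nilpotent F1_cyclic; exists N.+1 => a b.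
have eqY r (A : 'M[F]_(r, n)) : (A <= S1)%MS ->
    A *m (a *: B2 + b *: F0) = A *m (a *: B2 + b *: F1).
  by move=> sA; rewrite !mulmxDr -!scalemxAr eqF0F1.
have sS1Y : (S1 *m (a *: B2 + b *: F1) <= S1)%MS.
  rewrite mulmxDr -!scalemxAr addmx_sub // scalemx_sub //.
    exact: submx_trans (submxMr _ sS1S) sSB2.
  exact: residue_stable F1_cyclic.
have sSY : (S *m (a *: B2 + b *: F0) <= S1)%MS.
  by rewrite mulmxDr -!scalemxAr addmx_sub // scalemx_sub // extension_sub.
rewrite mxexprS mulmxA (mulmx_expr_agree eqY sS1Y _ sSY).
exact: submx_trans (submxMr _ sSY) (nilF1 a b).
Qed.

End Extension.

Lemma residue_cyclic_step (S : 'M[F]_n) :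
  (B1 <= S)%MS -> stablemx S B2 -> ~~ (S <= B1)%MS ->
  (forall S1 : 'M[F]_n,
     (\rank S1 < \rank S)%N -> (B1 <= S1)%MS -> stablemx S1 B2 ->
     exists F1 w1, residue_cyclic S1 F1 w1) ->
  exists F0 w, residue_cyclic S F0 w.
Proof.
move=> sB1S sSB2 nSB1 IH.
have [k0 nSH maxk0] := exists_max_ker_image nSB1.
set T := (B1 + S *m B2 + S :&: H k0)%MS.
have sTS : (T <= S)%MS by rewrite !addsmx_sub sB1S sSB2 capmxSl.
have /row_subPn[i ngT] := residue_peel_not_sub sSB2 sB1S nSH.
set g := row i S in ngT; have sgS : (g <= S)%MS := row_sub i S.
have [S1 [sTS1 sS1S ngS1 sSgS1]] := exists_hyperplane sTS sgS ngT.
have sB1S1 : (B1 <= S1)%MS by apply: submx_trans sTS1; rewrite /T -addsmxA addsmxSl.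
have sSB2S1 : (S *m B2 <= S1)%MS.
  by apply: submx_trans sTS1; rewrite /T addsmxC addsmxA addsmxSr.
have ltS1S : (\rank S1 < \rank S)%N.
  by rewrite rank_ltmx // ltmxE sS1S; apply: contra ngS1 => /(submx_trans sgS).
have [F1 [w1 F1_cyclic]] :=
  IH S1 ltS1S sB1S1 (submx_trans (submxMr _ sS1S) sSB2S1).
have nz_g : g != 0 by apply: contraNneq ngT => ->; exact: sub0mx.
have [F0 [eqF0g eqF0F1]] :=
  exists_mx_patch (pinvmx g *m w1) F1 (capmx_row_eq0 ngS1).
have gF0 : g *m F0 = w1 by rewrite eqF0g ?mulmx_pinv_row // genmxE.
have sSF0 := extension_sub sSgS1 eqF0F1 gF0 F1_cyclic.
exists F0, g; split.
- exact: sgS.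
- exact: submx_trans sSF0 sS1S.
- by rewrite eqF0F1 // (residue_image_stable F1_cyclic).
- move=> k; have [sSH|nSHk] := boolP (S <= H k)%MS.
    apply: submx_trans (submxMr _ (capmxSl _ _)) _.
    exact: submx_trans sSF0 (submx_trans sS1S sSH).
  have sSK : ((S :&: K k) <= S1 :&: K k)%MS.
    rewrite sub_capmx capmxSr andbT; apply: submx_trans sTS1.
    apply: submx_trans (addsmxSr _ _); rewrite sub_capmx capmxSl /=.
    apply: submx_trans (capmxSr _ _) (submx_trans _ (addsmxSl _ _)).
    exact: ker_expr_mono (maxk0 k nSHk).
  rewrite eqF0F1; last exact: submx_trans sSK (capmxSl _ _).
  exact: submx_trans (submxMr _ sSK) (residue_ker_stable F1_cyclic k).
- exact: extension_cyclic sB1S1 sSgS1 eqF0F1 gF0 F1_cyclic.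
- exact: extension_nilpotent sS1S sSB2S1 sSgS1 eqF0F1 gF0 F1_cyclic.
Qed.

Lemma residue_cyclic_exists (S : 'M[F]_n) :
  (B1 <= S)%MS -> stablemx S B2 -> exists F0 w, residue_cyclic S F0 w.
Proof.
elim: {S}(\rank S).+1 {-2}S (ltnSn (\rank S)) => // r IHr S ltSr sB1S sSB2.
have [sSB1|nSB1] := boolP (S <= B1)%MS.
  by exists 0, 0; exact: residue_cyclic_image.
apply: residue_cyclic_step => // S1 ltS1S; apply: IHr.
exact: leq_trans ltS1S _.
Qed.

End ResidueCyclic.

Lemma nilpotent_of_image_sub (F : fieldType) n (B Y : 'M[F]_n) m N :
  B ^+ m = 0 -> B *m Y = Y *m B -> (Y ^+ N <= B)%MS -> Y ^+ (N * m) = 0.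
Proof.
move=> Bm0 cBY sYB; rewrite exprM; apply/eqP; rewrite -submx0 -Bm0.
apply: (commmx_expr_sub _ sYB); exact/esym/commmxX/esym.
Qed.

Lemma cyclic_pair_of_residue (F : fieldType) n (B X F0 : 'M[F]_n)
    (w : 'rV[F]_n) p :
  B ^+ p = 0 -> (X - F0 <= B)%MS ->
  (forall U : 'M[F]_n,
     (w <= U)%MS -> (U *m F0 <= U + B)%MS -> (1%:M <= U + B)%MS) ->
  cyclic_pair B X w.
Proof.
move=> Bp0 sXF0 cyc U sw sUB sUX; apply: (nakayama_submx _ sUB Bp0).
rewrite mul1mx; apply: cyc => //.
have -> : U *m F0 = U *m X - U *m (X - F0) by rewrite mulmxBr opprB addrC subrK.
rewrite submxB ?(submx_trans sUX (addsmxSl _ _)) //.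
exact: submx_trans (mulmx_sub _ sXF0) (addsmxSr _ _).
Qed.

Theorem lemma7p3 (C : numClosedFieldType) (n : nat) (B1 B2 : 'M[C]_n)
  (hB1 : nilpotent_mx B1) (hB2 : nilpotent_mx B2)
  (hcomm : B1 *m B2 = B2 *m B1) :
  exists (B2' : 'M[C]_n) (w : 'rV[C]_n),
    [/\ nilpotent_mx B2',
        B1 *m B2' = B2' *m B1,
        (forall a b : C, nilpotent_mx (a *: B2 + b *: B2')) &
        cyclic_pair B1 B2' w].
Proof.
case: hB1 => m B1m0; case: hB2 => p B2p0.
have [F0 [w rc]] := residue_cyclic_exists B1m0 B2p0 hcomm (submx1 B1) (submx1 _).
have [X [cX sXF0]] : exists X, B1 *m X = X *m B1 /\ (X - F0 <= B1)%MS.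
  apply: (exists_commuting_lift B1m0 (residue_image_stable rc)) => k.
  by have := residue_ker_stable rc k; rewrite capmxC capmx1.
have nil_pencil a b : nilpotent_mx (a *: B2 + b *: X).
  have [N nilF0] := residue_nilpotent rc; exists (N * m)%N.
  apply: (nilpotent_of_image_sub B1m0).
    by rewrite mulmxDr mulmxDl -!scalemxAr -!scalemxAl hcomm cX.
  rewrite -(subrK ((a *: B2 + b *: F0) ^+ N) (_ ^+ N)); apply: addmx_sub.
  - apply: submx_exprB.
      rewrite mulmxDr -!scalemxAr addmx_sub ?scalemx_sub //.
        by rewrite hcomm submxMl.
      by rewrite cX submxMl.
    by rewrite opprD addrACA subrr add0r -scalerBr scalemx_sub.
  - by have := nilF0 a b; rewrite mul1mx.
exists X, w; split=> //.
  by have := nil_pencil 0 1; rewrite scale0r add0r scale1r.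
exact: cyclic_pair_of_residue B1m0 sXF0 (residue_cyclic_vec rc).
Qed.
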